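(* Let $G$ be a weighted undirected graph with internal vertex set $I$, boundary vertex set $X$, edge set $E$ and positive weights $w$, and let $S$ be its min cut function on $2^X$. Then a point $f\in\mathbb R^X$ lies in $F_S$ if and only if $f=\Phi_v$ for some flow $v$ on $G$.
   Context: Each edge is a pair of distinct vertices of $I\cup X$. A cut is a subset $r\subseteq I\cup X$; its edge set $\eth r$ is the set of edges with exactly one vertex in $r$, and $|\eth r|:=\sum_{e\in\eth r}w(e)$. The min cut function is $S(A):=\min\{|\eth r|: r\subseteq I\cup X,\ r\cap X=A\}$ for $A\subseteq X$. Fix an arbitrary orientation of each edge and set $s(i,e)=+1$ if $e$ points toward vertex $i\in e$ and $-1$ otherwise. A flow is a function $v:E\to\mathbb R$ with $|v(e)|\le w(e)$ for all $e$ and $\sum_{e\ni i}s(i,e)v(e)=0$ for every $i\in I$; its boundary flux is $\Phi_v(x):=\sum_{e\ni x}s(x,e)v(e)$ for $x\in X$. $F_S$ is the set of $f\in\mathbb R^X$ with $\big|\sum_{x\in A}f(x)\big|\le S(A)$ for all $A\subseteq X$. *)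

From HB Require Import structures.
From mathcomp Require Import all_boot all_order all_algebra.
From mathcomp Require Import reals.
Set Implicit Arguments. Unset Strict Implicit. Unset Printing Implicit Defensive.
Import Order.TTheory GRing.Theory Num.Theory.
Local Open Scope ring_scope.

(* Vertices are I + X (internal vertices inl i, boundary vertices inr x).
   Edges form a finite type E; each edge e is oriented (arbitrarily) from
   [tail e] to [head e]. *)
Section Graph.
Variables (R : realType) (I X E : finType).
Variables (tail head : E -> (I + X)%type) (w : E -> R).

Definition vertex := (I + X)%type.

Definition simple_edges : Prop :=
  (forall e, tail e != head e) /\
  (forall e1 e2, [set tail e1; head e1] = [set tail e2; head e2] -> e1 = e2).

Definition incident (u : vertex) (e : E) : bool := (tail e == u) || (head e == u).

Definition sgn (u : vertex) (e : E) : R := if head e == u then 1 else -1.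

Definition eth (r : {set vertex}) : {set E} :=
  [set e | (tail e \in r) != (head e \in r)].

Definition cutw (r : {set vertex}) : R := \sum_(e in eth r) w e.

Definition traceX (r : {set vertex}) : {set X} := [set x | inr x \in r].

(* the canonical cut realizing A (used only as seed for the minimum) *)
Definition embX (A : {set X}) : {set vertex} := [set inr x | x in A].

Definition mincut (A : {set X}) : R :=
  \big[Num.min/cutw (embX A)]_(r : {set vertex} | traceX r == A) cutw r.

Definition in_FS (f : X -> R) : Prop :=
  forall A : {set X}, `|\sum_(x in A) f x| <= mincut A.

Definition is_flow (v : E -> R) : Prop :=
  (forall e, `|v e| <= w e) /\
  (forall i : I, \sum_(e | incident (inl i) e) sgn (inl i) e * v e = 0).

Definition flux (v : E -> R) (x : X) : R :=
  \sum_(e | incident (inr x) e) sgn (inr x) e * v e.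

End Graph.

From mathcomp Require Import all_boot all_order all_algebra.
From mathcomp Require Import reals.
From mathcomp Require Import lra.
Set Implicit Arguments. Unset Strict Implicit. Unset Printing Implicit Defensive.
Import Order.TTheory GRing.Theory Num.Theory.
Local Open Scope ring_scope.

(* A flow satisfies |sum_(x in A) Phi_v x| <= |eth r| for every cut r with
   trace A, because the net flux out of r only uses the edges of eth r.
   Conversely, the supply b that is f on X and 0 on I satisfies
   sum_(u in r) b u <= |eth r| for every cut r, and Gale's feasibility theorem
   turns this into a flow.  Gale's theorem is proved by induction on the
   edges: the value t of an edge e = (p, q) must satisfy one lower bound for
   each cut S1 containing q but not p and one upper bound for each cut S2
   containing p but not q; every lower bound is below every upper bound since
   the cut function is submodular, with a gain of 2 c(e) on such a pair. *)

Section Network.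
Variables (R : realDomainType) (V E : finType) (tl hd : E -> V) (c : E -> R).

Definition crossing (S : {set V}) (e : E) : bool := (tl e \in S) != (hd e \in S).

Definition cap (F : {set E}) (S : {set V}) : R :=
  \sum_(e in F) (crossing S e)%:R * c e.

Definition incidence (e : E) (u : V) : R := (hd e == u)%:R - (tl e == u)%:R.

Definition inflow (v : E -> R) (u : V) : R := \sum_e incidence e u * v e.

Definition cut_condition (F : {set E}) (b : V -> R) : Prop :=
  forall S : {set V}, \sum_(u in S) b u <= cap F S.

Lemma sum_eq_indicator (a : V) (S : {set V}) :
  \sum_(u in S) ((a == u)%:R : R) = (a \in S)%:R.
Proof.
case: (boolP (a \in S)) => [aS | aNS].
  rewrite (bigD1 a) //= eqxx big1 ?addr0 // => u /andP[_ ua].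
  by rewrite eq_sym (negbTE ua).
by rewrite big1 // => u uS; case: eqP => // au; rewrite au uS in aNS.
Qed.

Lemma sum_incidence (e : E) (S : {set V}) :
  \sum_(u in S) incidence e u = (hd e \in S)%:R - (tl e \in S)%:R.
Proof. by rewrite sumrB !sum_eq_indicator. Qed.

Lemma sum_incidenceT (e : E) : \sum_u incidence e u = 0.
Proof. by rewrite -big_set /= sum_incidence !in_setT subrr. Qed.

Lemma sum_inflow (v : E -> R) (S : {set V}) :
  \sum_(u in S) inflow v u = \sum_e ((hd e \in S)%:R - (tl e \in S)%:R) * v e.
Proof.
rewrite exchange_big /=; apply: eq_bigr => e _.
by rewrite -mulr_suml sum_incidence.
Qed.

Lemma inflow_update (v : E -> R) (e : E) (t : R) (u : V) : v e = 0 ->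
  inflow (fun i => if i == e then t else v i) u = inflow v u + incidence e u * t.
Proof.
move=> ve0; rewrite /inflow (bigD1 e) //= eqxx [in RHS](bigD1 e) //= ve0 mulr0 add0r.
rewrite addrC; congr (_ + _); apply: eq_bigr => i /negbTE -> //.
Qed.

Lemma inflow_cut_le (v : E -> R) (S : {set V}) : (forall e, `|v e| <= c e) ->
  `|\sum_(u in S) inflow v u| <= cap setT S.
Proof.
move=> vc; rewrite sum_inflow /cap big_set /=.
apply: le_trans (ler_norm_sum _ _ _) _; apply: ler_sum => e _.
rewrite normrM /crossing.
by case: (hd e \in S); case: (tl e \in S);
  rewrite /= ?subrr ?normr0 ?mul0r ?subr0 ?sub0r ?normrN ?normr1 ?mul1r.
Qed.

Lemma sum_setIU (b : V -> R) (S1 S2 : {set V}) :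
  \sum_(u in S1) b u + \sum_(u in S2) b u =
  \sum_(u in S1 :&: S2) b u + \sum_(u in S1 :|: S2) b u.
Proof.
rewrite !(big_mkcond (fun u => u \in _)) -!big_split /=; apply: eq_bigr => u _.
by rewrite in_setI in_setU; case: (u \in S1); case: (u \in S2); rewrite /= ?addr0 ?add0r.
Qed.

Lemma cap_D1 (F : {set E}) (e : E) (S : {set V}) : e \in F ->
  cap F S = (crossing S e)%:R * c e + cap (F :\ e) S.
Proof.
move=> eF; rewrite /cap (bigD1 e eF) /=; congr (_ + _).
by apply: eq_bigl => i; rewrite in_setD1 andbC.
Qed.

Hypothesis c_ge0 : forall e, 0 <= c e.

Lemma crossing_submod (S1 S2 : {set V}) (e : E) :
  ((crossing (S1 :&: S2) e)%:R + (crossing (S1 :|: S2) e)%:R : R) <=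
  (crossing S1 e)%:R + (crossing S2 e)%:R.
Proof.
rewrite /crossing !inE.
by case: (tl e \in S1); case: (tl e \in S2); case: (hd e \in S1); case: (hd e \in S2);
  rewrite /= ?addr0 ?add0r ?lexx //; lra.
Qed.

Lemma cap_submod (F : {set E}) (S1 S2 : {set V}) :
  cap F (S1 :&: S2) + cap F (S1 :|: S2) <= cap F S1 + cap F S2.
Proof.
rewrite /cap -!big_split /=; apply: ler_sum => e _.
by rewrite -!mulrDl ler_wpM2r ?crossing_submod.
Qed.

Lemma cap_submod_opposite (F : {set E}) (e : E) (S1 S2 : {set V}) : e \in F ->
  hd e \in S1 -> tl e \notin S1 -> tl e \in S2 -> hd e \notin S2 ->
  cap F (S1 :&: S2) + cap F (S1 :|: S2) + 2 * c e <= cap F S1 + cap F S2.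
Proof.
move=> eF q1 p1 p2 q2; rewrite !(cap_D1 _ eF) /crossing !inE.
rewrite q1 (negbTE p1) p2 (negbTE q2) /= mul1r mul0r !add0r.
have := cap_submod (F :\ e) S1 S2; lra.
Qed.

Lemma cut_condition_opposite (F : {set E}) (b : V -> R) (e : E) (S1 S2 : {set V}) :
  e \in F -> cut_condition F b ->
  hd e \in S1 -> tl e \notin S1 -> tl e \in S2 -> hd e \notin S2 ->
  \sum_(u in S1) b u + \sum_(u in S2) b u + 2 * c e <= cap F S1 + cap F S2.
Proof.
move=> eF hb q1 p1 p2 q2; rewrite sum_setIU.
have := cap_submod_opposite eF q1 p1 p2 q2.
have := hb (S1 :&: S2); have := hb (S1 :|: S2); lra.
Qed.

Lemma cut_condition0_eq0 (b : V -> R) :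
  \sum_u b u = 0 -> cut_condition set0 b -> forall u, b u = 0.
Proof.
move=> sb hb u; have b_le0 u' : b u' <= 0.
  by have := hb [set u']; rewrite big_set1 /cap big_set0.
have /psumr_eq0P nb0 : \sum_u' (- b u') = 0 by rewrite sumrN sb oppr0.
by apply/eqP; rewrite -oppr_eq0 nb0 // => u' _; rewrite oppr_ge0.
Qed.

Lemma cut_condition_D1 (F : {set E}) (b : V -> R) (e : E) :
  e \in F -> cut_condition F b ->
  exists2 t, `|t| <= c e &
    cut_condition (F :\ e) (fun u => b u - incidence e u * t).
Proof.
move=> eF hb; set p := tl e; set q := hd e.
pose L := \big[Num.max/- c e]_(S : {set V} | (q \in S) && (p \notin S))
            (\sum_(u in S) b u - cap F S + c e).
pose U := \big[Num.min/c e]_(S : {set V} | (p \in S) && (q \notin S))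
            (cap F S - c e - \sum_(u in S) b u).
have LU : L <= U.
  apply: bigmax_le => [|S1 /andP[q1 p1]]; apply: le_bigmin => [|S2 /andP[p2 q2]].
  - by have := c_ge0 e; lra.
  - by have := hb S2; lra.
  - by have := hb S1; lra.
  - by have := cut_condition_opposite eF hb q1 p1 p2 q2; lra.
have L_ge : - c e <= L by apply: bigmax_ge_id.
have U_le : U <= c e by apply: bigmin_le_id.
exists L; first by rewrite ler_norml; lra.
move=> S; rewrite sumrB -mulr_suml sum_incidence.
have := hb S; rewrite (cap_D1 S eF) /crossing -/p -/q.
case pS: (p \in S); case qS: (q \in S) => /=.
- lra.
- have : U <= cap F S - c e - \sum_(u in S) b u by apply: bigmin_le_cond; rewrite pS qS.
  rewrite (cap_D1 S eF) /crossing -/p -/q pS qS /=; lra.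
- have : \sum_(u in S) b u - cap F S + c e <= L by apply: le_bigmax_cond; rewrite pS qS.
  rewrite (cap_D1 S eF) /crossing -/p -/q pS qS /=; lra.
- lra.
Qed.

Lemma gale_feasibility (F : {set E}) (b : V -> R) : \sum_u b u = 0 -> cut_condition F b ->
  exists v : E -> R, [/\ forall e, `|v e| <= c e, forall u, inflow v u = b u
                       & forall e, e \notin F -> v e = 0].
Proof.
elim: #|F| {-2}F (erefl #|F|) b => [|n IH] {}F cardF b sb hb.
  have F0 : F = set0 by apply/eqP; rewrite -cards_eq0 cardF.
  rewrite F0 in hb; exists (fun _ => 0); split=> [e|u|//]; first by rewrite normr0.
  by rewrite (cut_condition0_eq0 sb hb) /inflow big1 // => e _; rewrite mulr0.
have [e eF] : exists e, e \in F by apply/set0Pn; rewrite -card_gt0 cardF.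
have [t te hb'] := cut_condition_D1 eF hb.
have cardFe : #|F :\ e| = n by move: (cardsD1 e F); rewrite eF cardF add1n => -[].
have [|v [vc vb v0]] := IH _ cardFe _ _ hb'.
  by rewrite sumrB -mulr_suml sum_incidenceT mul0r sb subrr.
exists (fun i => if i == e then t else v i); split=> [i|u|i iF].
- by case: eqP => [-> | _].
- by rewrite inflow_update ?vb ?subrK //; apply: v0; rewrite !inE eqxx.
- by case: eqP => [ie | _]; [rewrite ie eF in iF | rewrite v0 // !inE negb_and iF orbT].
Qed.

End Network.

Section BoundaryFlows.
Variables (R : realType) (I X E : finType).
Variables (tail head : E -> vertex I X) (w : E -> R).

Lemma flux_inflow (v : E -> R) (u : vertex I X) : (forall e, tail e != head e) ->
  \sum_(e | incident tail head u e) sgn R head u e * v e = inflow tail head v u.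
Proof.
move=> loopless; rewrite /inflow big_mkcond /=; apply: eq_bigr => e _.
rewrite /incident /sgn /incidence.
case: (eqVneq (head e) u) => [hu|hu]; case: (eqVneq (tail e) u) => [tu|tu] //=.
- by move: (loopless e); rewrite hu tu eqxx.
- by rewrite subr0.
- by rewrite sub0r mulN1r.
- by rewrite subrr mul0r.
Qed.

Lemma cutw_cap (r : {set vertex I X}) : cutw tail head w r = cap tail head w setT r.
Proof.
rewrite /cutw /cap big_mkcond big_set /=; apply: eq_bigr => e _.
by rewrite /eth inE /crossing; case: (_ != _); rewrite ?mul1r ?mul0r.
Qed.

Lemma cutw_setT : cutw tail head w setT = 0.
Proof. by rewrite /cutw big_pred0 // => e; rewrite /eth !inE. Qed.

Lemma mincut_le_cutw (r : {set vertex I X}) :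
  mincut tail head w (traceX r) <= cutw tail head w r.
Proof. exact: bigmin_le_cond. Qed.

Lemma traceX_embX (A : {set X}) : traceX (embX I A) = A.
Proof.
apply/setP => x; rewrite /traceX /embX inE.
by apply/imsetP/idP => [[y yA [->]] // | xA]; exists x.
Qed.

Lemma sum_traceX (g : vertex I X -> R) (r : {set vertex I X}) :
  (forall i, g (inl i) = 0) -> \sum_(u in r) g u = \sum_(x in traceX r) g (inr x).
Proof.
move=> g0; rewrite big_sumType /= big1 ?add0r //.
by apply: eq_bigl => x; rewrite /traceX inE.
Qed.

Lemma flux_cut_le (v : E -> R) (r : {set vertex I X}) :
  (forall e, tail e != head e) -> is_flow tail head w v ->
  `|\sum_(x in traceX r) flux tail head v x| <= cutw tail head w r.
Proof.
move=> loopless [vw v_cons]; rewrite /flux.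
under eq_bigr do rewrite flux_inflow //.
rewrite -sum_traceX ?cutw_cap; first exact: inflow_cut_le.
by move=> i; rewrite -flux_inflow.
Qed.

End BoundaryFlows.

Theorem theorem29 (R : realType) (I X E : finType)
  (tail head : E -> (I + X)%type) (w : E -> R) :
  simple_edges tail head ->
  (forall e, 0 < w e) ->
  forall f : X -> R,
    in_FS tail head w f <->
    exists v : E -> R, is_flow tail head w v /\ forall x, f x = flux tail head v x.
Proof.
move=> [loopless _] w_gt0 f; split=> [f_FS | [v [v_flow fv]] A].
- pose b (u : vertex I X) : R := if u is inr x then f x else 0.
  have sum_b (S : {set vertex I X}) : \sum_(u in S) b u = \sum_(x in traceX S) f x by rewrite sum_traceX.
  have b_cut : cut_condition tail head w setT b.
    move=> S; rewrite sum_b -cutw_cap; apply: le_trans (ler_norm _) _.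
    exact: le_trans (f_FS _) (mincut_le_cutw _ _ _ _).
  have b_sum0 : \sum_u b u = 0.
    apply/eqP; rewrite -normr_le0 -big_set sum_b; apply: le_trans (f_FS _) _.
    by rewrite -(cutw_setT tail head w) mincut_le_cutw.
  have [v [vw vb _]] := gale_feasibility (fun e => ltW (w_gt0 e)) b_sum0 b_cut.
  exists v; split; first split=> // i.
    by rewrite flux_inflow // vb.
  by move=> x; rewrite /flux flux_inflow // vb.
- under eq_bigr do rewrite fv.
  rewrite /mincut; apply: le_bigmin => [|r /eqP <-]; last exact: flux_cut_le.
  by rewrite -{1}(traceX_embX I A); exact: flux_cut_le.
Qed.
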